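(* Let $v_1,\ldots,v_n$ be integers with $v_i\geq 2$, let $Q$ be the $n\times n$ tridiagonal matrix with $Q_{ii}=-v_i$, $Q_{i,i+1}=Q_{i+1,i}=1$ and all other entries $0$, and let $f:\mathbb{R}^n\to\mathbb{R}$, $f(z)=z^TQ^{-1}z$. Let $y=(-v_1+2,\ldots,-v_n+2)$. Then for every $x\in\mathbb{R}^n$ with $|x_i|\leq|y_i|$ for all $i$ and $|x_{i_0}|<|y_{i_0}|$ for at least one index $i_0$, we have $f(x)>f(y)$.
   Context: In the paper $y$ is the vector of rotation numbers of a Legendrian chain of unknots giving a universally tight structure on $L(p,q)$ with $-p/q=[-v_1,\ldots,-v_n]$, and $x$ ranges over rotation vectors of virtually overtwisted structures; the statement above is the purely algebraic content. *)

From mathcomp Require Import all_boot all_order all_algebra.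
Set Implicit Arguments. Unset Strict Implicit. Unset Printing Implicit Defensive.
Import Order.TTheory GRing.Theory Num.Theory.
Local Open Scope ring_scope.

Definition tridiagQ (R : ringType) (n : nat) (v : 'I_n -> int) : 'M[R]_n :=
  \matrix_(i < n, j < n)
     (if i == j then - (v i)%:~R
      else if (j == i.+1 :> nat) || (i == j.+1 :> nat) then 1 else 0).

Definition quadf (R : comUnitRingType) (n : nat) (v : 'I_n -> int) (z : 'cV[R]_n) : R :=
  (z^T *m invmx (tridiagQ R v) *m z) ord0 ord0.

Definition yvec (R : ringType) (n : nat) (v : 'I_n -> int) : 'cV[R]_n :=
  \col_(i < n) (- (v i)%:~R + 2).

From mathcomp Require Import all_boot all_order all_algebra.
From mathcomp Require Import ring lra zify.
Set Implicit Arguments. Unset Strict Implicit. Unset Printing Implicit Defensive.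
Import Order.TTheory GRing.Theory Num.Theory.
Local Open Scope ring_scope.

(* With v_i >= 2, -z^T Q z = sum_i (v_i - 2) z_i^2 + z_1^2 + sum_i (z_i - z_{i+1})^2 + z_n^2,
   so Q is negative definite; as its off-diagonal entries are nonnegative, Q^-1 is
   negative definite with nonpositive entries.  For such a matrix M the form
   f(z) = z^T M z satisfies f(|z|) <= f(z) and decreases strictly from a nonnegative
   point along any nonzero nonnegative direction.  Since y <= 0 entrywise,
   f(y) = f(|y|) < f(|x|) <= f(x). *)

Definition qform (R : pzRingType) n (M : 'M[R]_n) (z : 'cV[R]_n) : R :=
  (z^T *m M *m z) ord0 ord0.

Definition neg_definite (R : numDomainType) n (M : 'M[R]_n) : Prop :=
  forall z : 'cV[R]_n, z != 0 -> qform M z < 0.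

Section QuadraticForms.

Variables (R : realFieldType) (n : nat).
Implicit Types (M : 'M[R]_n) (a b d z : 'cV[R]_n).

Lemma bilinE a M b :
  (a^T *m M *m b) 0 0 = \sum_i \sum_j a i 0 * M i j * b j 0.
Proof.
rewrite mxE; under eq_bigr => j _ do rewrite mxE big_distrl /=.
rewrite exchange_big; apply: eq_bigr => i _; apply: eq_bigr => j _.
by rewrite !mxE.
Qed.

Lemma qformD M1 M2 z : qform (M1 + M2) z = qform M1 z + qform M2 z.
Proof. by rewrite /qform mulmxDr mulmxDl mxE. Qed.

Lemma qformN M z : qform (- M) z = - qform M z.
Proof. by rewrite /qform mulmxN mulNmx mxE. Qed.

Lemma qformNv M z : qform M (- z) = qform M z.
Proof. by rewrite /qform (raddfN trmx) mulNmx mulmxN mulNmx opprK. Qed.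

Lemma qform_trmx M z : qform M^T z = qform M z.
Proof.
rewrite /qform.
have -> : z^T *m M^T *m z = (z^T *m M *m z)^T by rewrite !trmx_mul trmxK mulmxA.
by rewrite mxE.
Qed.

Lemma qform_diag (d : 'I_n -> R) z :
  qform (diag_mx (\row_i d i)) z = \sum_i d i * z i 0 ^+ 2.
Proof.
rewrite /qform mul_mx_diag mxE; apply: eq_bigr => i _.
by rewrite !mxE mulrAC mulrC expr2.
Qed.

Lemma neg_definite_unitmx M : neg_definite M -> M \in unitmx.
Proof.
move=> Mnd; rewrite unitmxE unitfE; apply/det0P => -[u u0 uM].
have := Mnd u^T; rewrite trmx_eq0 => /(_ u0).
by rewrite /qform trmxK uM mul0mx mxE ltxx.
Qed.

Lemma neg_definite_invmx M : neg_definite M -> neg_definite (invmx M).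
Proof.
move=> Mnd d d0; have Mu := neg_definite_unitmx Mnd.
have -> : qform (invmx M) d = qform M (invmx M *m d).
  by rewrite -[LHS]qform_trmx /qform trmx_mul !mulmxA mulmxK.
apply: Mnd; apply: contra d0 => /eqP z0.
by rewrite -[d](mulKVmx Mu) z0 mulmx0.
Qed.

Lemma bilin_le0 M a b :
  (forall i j, M i j <= 0) -> (forall i, 0 <= a i 0) -> (forall i, 0 <= b i 0) ->
  (a^T *m M *m b) 0 0 <= 0.
Proof.
move=> M_le0 a_ge0 b_ge0; rewrite bilinE.
apply: sumr_le0 => i _; apply: sumr_le0 => j _.
exact: mulr_le0_ge0 (mulr_ge0_le0 _ _) _.
Qed.

Lemma qform_map_norm_le M z :
  (forall i j, M i j <= 0) -> qform M (map_mx Num.norm z) <= qform M z.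
Proof.
move=> M_le0; rewrite /qform !bilinE; apply: ler_sum => i _; apply: ler_sum => j _.
rewrite !mxE mulrAC [leRHS]mulrAC; apply: ler_wnM2r => //.
by rewrite -normrM ler_norm.
Qed.

Lemma qform_addv_lt M a d :
  (forall i j, M i j <= 0) -> neg_definite M ->
  (forall i, 0 <= a i 0) -> (forall i, 0 <= d i 0) -> d != 0 ->
  qform M (a + d) < qform M a.
Proof.
move=> M_le0 Mnd a_ge0 d_ge0 d_neq0.
have := bilin_le0 M_le0 a_ge0 d_ge0; have := bilin_le0 M_le0 d_ge0 a_ge0.
have := Mnd d d_neq0.
rewrite /qform (raddfD trmx) !(mulmxDl, mulmxDr) !mxE; lra.
Qed.

Lemma neg_definite_sign M z :
  (forall i j, i != j -> 0 <= M i j) -> neg_definite M ->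
  (forall i, 0 <= (M *m z) i 0) -> forall i, z i 0 <= 0.
Proof.
move=> M_offdiag Mnd Mz_ge0.
(* With p the positive part of z and m = z - p, p_i m_i = 0 makes p^T M m <= 0,
   so 0 <= p^T M z forces 0 <= p^T M p, i.e. p = 0. *)
pose p := map_mx (Num.max^~ 0) z; pose m := z - p.
have p_ge0 i : 0 <= p i 0 by rewrite mxE le_max lexx orbT.
have m_le0 i : m i 0 <= 0 by rewrite !mxE subr_le0 le_max lexx.
have pm0 i : p i 0 * m i 0 = 0.
  by rewrite !mxE; case: leP => _; rewrite ?mul0r ?subrr ?mulr0.
suff p0 : p = 0 by move=> i; have := m_le0 i; rewrite /m p0 subr0.
apply/eqP; apply: contraT => p_neq0.
have pMz_ge0 : 0 <= (p^T *m M *m z) 0 0.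
  rewrite -mulmxA mxE; apply: sumr_ge0 => i _.
  by rewrite mxE; apply: mulr_ge0.
have pMm_le0 : (p^T *m M *m m) 0 0 <= 0.
  rewrite bilinE; apply: sumr_le0 => i _; apply: sumr_le0 => j _.
  have [<-|ij] := eqVneq i j; first by rewrite mulrAC pm0 mul0r.
  by apply: mulr_ge0_le0 (mulr_ge0 _ (M_offdiag _ _ ij)) _.
have : (p^T *m M *m z) 0 0 = qform M p + (p^T *m M *m m) 0 0.
  by rewrite -{1}(subrKC p z) mulmxDr [LHS]mxE.
have := Mnd p p_neq0; lra.
Qed.

Lemma invmx_le0 M :
  (forall i j, i != j -> 0 <= M i j) -> neg_definite M ->
  forall i j, invmx M i j <= 0.
Proof.
move=> M_offdiag Mnd i j.
have := neg_definite_sign (z := col j (invmx M)) M_offdiag Mnd _ i.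
rewrite mxE; apply=> k.
by rewrite colE mulmxA mulmxV ?neg_definite_unitmx // mul1mx mxE ler0n.
Qed.

End QuadraticForms.

Lemma sum_telescope_sqr (R : comPzRingType) (g : nat -> R) N :
  \sum_(k < N) (2 * g k ^+ 2 - 2 * g k * g k.+1) =
  g 0%N ^+ 2 + \sum_(k < N) (g k - g k.+1) ^+ 2 - g N ^+ 2.
Proof.
elim: N => [|N IH]; first by rewrite !big_ord0 addr0 subrr.
by rewrite !big_ord_recr /= IH; ring.
Qed.

Lemma path_energy_gt0 (R : realDomainType) (g : nat -> R) N k :
  (k <= N)%N -> g k != 0 -> 0 < g 0%N ^+ 2 + \sum_(l < N) (g l - g l.+1) ^+ 2.
Proof.
have sqr_gt0 (x : R) : x != 0 -> 0 < x ^+ 2 by rewrite lt_def sqr_ge0 sqrf_eq0 andbT.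
elim: N k => [|N IH] k.
  by rewrite leqn0 => /eqP -> /sqr_gt0; rewrite big_ord0 addr0.
rewrite big_ord_recr /= addrA leq_eqVlt ltnS => /predU1P [->|kN] gk; last first.
  by apply: ltr_wpDr (sqr_ge0 _) (IH k kN gk).
have [gN0|gN] := eqVneq (g N) 0; last first.
  by apply: ltr_wpDr (sqr_ge0 _) (IH N (leqnn N) gN).
rewrite gN0 sub0r sqrrN; apply: ltr_wpDl (sqr_gt0 _ gk).
by apply: addr_ge0 (sqr_ge0 _) (sumr_ge0 _ (fun l _ => sqr_ge0 _)).
Qed.

Section TridiagonalForm.

Variables (R : realFieldType) (n : nat).
Implicit Types (v : 'I_n -> int) (z : 'cV[R]_n).

Definition superdiag_mx : 'M[R]_n := \matrix_(i, j) ((j == i.+1 :> nat)%:R).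

Definition nth_col z (k : nat) : R := if insub k is Some i then z i 0 else 0.

Lemma nth_col_ord z (i : 'I_n) : nth_col z i = z i 0.
Proof. by rewrite /nth_col valK. Qed.

Lemma nth_col_out z k : (n <= k)%N -> nth_col z k = 0.
Proof. by move=> nk; rewrite /nth_col insubN // -leqNgt. Qed.

Lemma sum_delta_nth_col z (k : nat) :
  \sum_(j < n) (j == k :> nat)%:R * z j 0 = nth_col z k.
Proof.
rewrite /nth_col; case: insubP => [i _ <-|kn].
  rewrite (bigD1 i) //= eqxx mul1r big1 ?addr0 // => j ji.
  by rewrite val_eqE (negbTE ji) mul0r.
rewrite big1 // => j _.
have -> : (val j == k) = false by apply: contraNF kn => /eqP <-; exact: ltn_ord.
by rewrite mul0r.
Qed.

Lemma qform_superdiag z :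
  qform superdiag_mx z = \sum_(i < n) nth_col z i * nth_col z i.+1.
Proof.
rewrite /qform -mulmxA mxE; apply: eq_bigr => i _.
rewrite !mxE nth_col_ord -sum_delta_nth_col; congr (_ * _).
by apply: eq_bigr => j _; rewrite !mxE.
Qed.

Lemma tridiagQE v :
  tridiagQ R v = superdiag_mx + superdiag_mx^T - diag_mx (\row_i (v i)%:~R).
Proof.
apply/matrixP => i j; rewrite !mxE.
have [<-|ij] := eqVneq i j.
  have -> : (i == i.+1 :> nat) = false by lia.
  by rewrite add0r sub0r mulr1n.
rewrite mulr0n subr0.
have [e|ne] := eqVneq (j : nat) i.+1.
  have -> : (i == j.+1 :> nat) = false by lia.
  by rewrite addr0.
by rewrite add0r; case: (_ == _).
Qed.

Lemma tridiagQ_offdiag_ge0 v i j : i != j -> 0 <= tridiagQ R v i j.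
Proof. by rewrite mxE => /negbTE ->; case: ifP. Qed.

Lemma qform_tridiagQ v z :
  qform (tridiagQ R v) z =
  2 * \sum_(i < n) nth_col z i * nth_col z i.+1 - \sum_i (v i)%:~R * z i 0 ^+ 2.
Proof.
rewrite tridiagQE !qformD qformN qform_trmx qform_superdiag qform_diag.
ring.
Qed.

Lemma tridiagQ_neg_definite v :
  (forall i, 2 <= v i) -> neg_definite (tridiagQ R v).
Proof.
move=> v_ge2 z z_neq0.
have [i zi_neq0] : exists i, z i 0 != 0.
  apply/existsP; apply: contraNT z_neq0; rewrite negb_exists => /forallP z0.
  by apply/eqP/matrixP => i j; rewrite (ord1 j) mxE; apply/eqP/negPn/z0.
set g := nth_col z.
have energy : 0 < g 0%N ^+ 2 + \sum_(k < n) (g k - g k.+1) ^+ 2.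
  by apply: (path_energy_gt0 (ltnW (ltn_ord i))); rewrite /g nth_col_ord.
have telescope := sum_telescope_sqr g n.
rewrite [g n]nth_col_out // [0 ^+ 2]expr2 mul0r subr0 in telescope.
have weights : 0 <= \sum_i ((v i)%:~R - 2) * z i 0 ^+ 2.
  apply: sumr_ge0 => j _; apply: mulr_ge0 (sqr_ge0 _).
  by rewrite subr_ge0 (ler_int R 2).
have diag_split : \sum_i (v i)%:~R * z i 0 ^+ 2 =
    \sum_i ((v i)%:~R - 2) * z i 0 ^+ 2 + \sum_(k < n) 2 * g k ^+ 2.
  by rewrite -big_split; apply: eq_bigr => j _; rewrite /= /g nth_col_ord; ring.
have cross_split : \sum_(k < n) (2 * g k ^+ 2 - 2 * g k * g k.+1) =
    \sum_(k < n) 2 * g k ^+ 2 - 2 * \sum_(k < n) g k * g k.+1.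
  by rewrite sumrB mulr_sumr; congr (_ - _); apply: eq_bigr => k _; rewrite mulrA.
rewrite qform_tridiagQ -/g; lra.
Qed.

End TridiagonalForm.

Theorem proposition3p3 (R : realFieldType) (n : nat) (v : 'I_n -> int)
  (hv : forall i, 2 <= v i) (x : 'cV[R]_n)
  (hle : forall i, `|x i ord0| <= `|yvec R v i ord0|)
  (hlt : exists i0, `|x i0 ord0| < `|yvec R v i0 ord0|) :
  quadf v x > quadf v (yvec R v).
Proof.
set Q := tridiagQ R v; set y := yvec R v.
have Q_nd : neg_definite Q := tridiagQ_neg_definite hv.
have M_le0 := invmx_le0 (@tridiagQ_offdiag_ge0 R n v) Q_nd.
have norm_y : map_mx Num.norm y = - y.
  apply/matrixP => i j; rewrite (ord1 j) !mxE ler0_norm // addrC subr_le0.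
  by rewrite (ler_int R 2).
have d_neq0 : map_mx Num.norm y - map_mx Num.norm x != 0.
  case: hlt => i0; apply: contraTneq => /matrixP /(_ i0 0).
  by rewrite !mxE => /eqP; rewrite subr_eq0 => /eqP ->; rewrite ltxx.
change (qform (invmx Q) y < qform (invmx Q) x).
apply: lt_le_trans (qform_map_norm_le x M_le0).
rewrite -[qform _ y]qformNv -norm_y -(subrKC (map_mx Num.norm x) (map_mx Num.norm y)).
apply: qform_addv_lt (neg_definite_invmx Q_nd) _ _ d_neq0 => // i.
  by rewrite mxE normr_ge0.
by move: (hle i); rewrite !mxE subr_ge0.
Qed.
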